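(* Let $a_i,b_i,a'_i,b'_i\ge 0$ ($i=1,2$), $v_1=(a'_1-a_1,b'_1-b_1)$, $v_2=(a'_2-a_2,b'_2-b_2)$, with $-1<\frac{b'_1-b_1}{a'_1-a_1}<0$ and $\frac{b'_2-b_2}{a'_2-a_2}<-1$. For $\epsilon\in(0,1)$ let $A(\epsilon)\in\mathbb{R}^2_{>0}$ be the intersection point of the curves $x^{a'_1-a_1}y^{b'_1-b_1}=\epsilon^2$ and $x^{a'_2-a_2}y^{b'_2-b_2}=\epsilon^{-2}$, and let $J(\epsilon)$ be the Jacobian matrix at $A(\epsilon)$ of the vector field $$F_\epsilon(x,y)=\big(\epsilon x^{a_1}y^{b_1}-\tfrac1\epsilon x^{a'_1}y^{b'_1}\big)v_1+\big(\tfrac1\epsilon x^{a_2}y^{b_2}-\epsilon x^{a'_2}y^{b'_2}\big)v_2$$ (the system followed by the trajectory from $D(\epsilon)=\{x^{a'_1-a_1}y^{b'_1-b_1}=\epsilon^2\}\cap\{x^{a'_2-a_2}y^{b'_2-b_2}=\epsilon^{2}\}$ to $A(\epsilon)$). Then, as $\epsilon$ varies, $J(\epsilon)$ has equal eigenvalues for at most finitely many values of $\epsilon$.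
   Context: $F_\epsilon$ is the mass-action vector field of the network $a_1X+b_1Y\rightleftharpoons a'_1X+b'_1Y$, $a_2X+b_2Y\rightleftharpoons a'_2X+b'_2Y$ with constant rate constants $k_1=\epsilon,k_2=1/\epsilon,k_3=1/\epsilon,k_4=\epsilon$; $A(\epsilon)$ is its (detailed balanced) positive equilibrium. *)

From HB Require Import structures.
From mathcomp Require Import all_boot all_order all_algebra.
From mathcomp Require Import all_classical all_reals all_analysis.
From mathcomp Require Import complex.
Set Implicit Arguments. Unset Strict Implicit. Unset Printing Implicit Defensive.
Import Order.TTheory GRing.Theory Num.Theory.
Local Open Scope ring_scope.

Definition mono {R : realType} (a b x y : R) : R := (x `^ a) * (y `^ b).

(* The mass-action vector field F_eps of the network, with rates
   k1 = eps, k2 = 1/eps, k3 = 1/eps, k4 = eps, component i = 0 (x) or 1 (y). *)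
Definition Feps {R : realType} (a1 b1 a1' b1' a2 b2 a2' b2' eps : R)
  (i : 'I_2) (x y : R) : R :=
  let v1 := if i == ord0 then a1' - a1 else b1' - b1 in
  let v2 := if i == ord0 then a2' - a2 else b2' - b2 in
  (eps * mono a1 b1 x y - eps^-1 * mono a1' b1' x y) * v1
  + (eps^-1 * mono a2 b2 x y - eps * mono a2' b2' x y) * v2.

Definition jacobian2 {R : realType} (F : 'I_2 -> R -> R -> R) (x0 y0 : R)
  : 'M[R]_2 :=
  \matrix_(i, j) (if j == ord0 then derive1 (fun t => F i t y0) x0
                  else derive1 (fun t => F i x0 t) y0).

(* A real 2x2 matrix has equal eigenvalues: its characteristic polynomial,
   over the algebraic closure C = R[i], is (X - lambda)^2 for some lambda. *)
Definition equal_eigenvalues {R : realType} (M : 'M[R]_2) : Prop :=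
  exists lam : R[i],
    char_poly (map_mx (fun r : R => (r%:C)%C) M) = ('X - lam%:P) ^+ 2.

From HB Require Import structures.
From mathcomp Require Import all_boot all_order all_algebra.
From mathcomp Require Import all_classical all_reals all_analysis.
From mathcomp Require Import complex.
From mathcomp Require Import ring lra.
Import Order.TTheory GRing.Theory Num.Theory.
Local Open Scope ring_scope.
Set Implicit Arguments. Unset Strict Implicit. Unset Printing Implicit Defensive.

(* At the equilibrium A(eps) the monomials of each reversible reaction are tied
   together (x^a1' y^b1' = eps^2 x^a1 y^b1 and x^a2' y^b2' = eps^-2 x^a2 y^b2), so
   the Jacobian factors as J = (p v1 v1^T + q v2 v2^T) D with p, q > 0 and
   D = -diag(1/x, 1/y).  For such a matrix
     tr(J)^2 - 4 det(J) = (p <v1,v1>_D - q <v2,v2>_D)^2 + 4 p q <v1,v2>_D^2,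
   and <v1,v2>_D cannot vanish because v1 and v2 have slopes of the same sign.
   So J(eps) has distinct eigenvalues for every eps in (0,1); the nonnegativity
   of the stoichiometric coefficients is never used. *)

Lemma det_mx22 (R : comNzRingType) (A : 'M[R]_2) :
  \det A = A 0 0 * A 1 1 - A 0 1 * A 1 0.
Proof.
rewrite (expand_det_row _ 0) !big_ord_recl big_ord0 /cofactor !det_mx11 !mxE /=.
have -> : lift ord0 ord0 = 1 :> 'I_2 by apply: val_inj.
have -> : lift 1 0 = 0 :> 'I_2 by apply: val_inj.
rewrite (_ : ord0 = 0 :> 'I_2) // addn0 expr0 expr1; ring.
Qed.

Lemma mxtrace22 (R : comNzRingType) (A : 'M[R]_2) : \tr A = A 0 0 + A 1 1.
Proof.
rewrite /mxtrace !big_ord_recl big_ord0 addr0.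
by have -> : lift ord0 ord0 = 1 :> 'I_2 by apply: val_inj.
Qed.

Lemma equal_eigenvalues_discr (R : realType) (M : 'M[R]_2) :
  equal_eigenvalues M -> (\tr M) ^+ 2 = 4 * \det M.
Proof.
case=> lam charM.
set MC := map_mx (fun r : R => (r%:C)%C) M.
have := char_poly_trace MC (isT : (0 < 2)%N).
have := char_poly_det MC.
rewrite charM (trace_map_mx (real_complex R)) (det_map_mx (real_complex R)).
rewrite sqrrB !coefE /= => det_lam tr_lam.
apply: (@complexI R).
rewrite rmorphXn rmorphM /= (rmorph_nat (real_complex R) 4).
have -> : (\det M)%:C%C = lam * lam.
  by transitivity ((-1) ^+ 2 * (\det M)%:C%C); [ring | rewrite -det_lam; ring].
have -> : (\tr M)%:C%C = lam *+ 2.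
  by transitivity (- - (\tr M)%:C%C); [ring | rewrite -tr_lam; ring].
ring.
Qed.

Definition vec2 {T : Type} (u w : T) (i : 'I_2) : T := if i == ord0 then u else w.

Section WeightedDyads.
Variable R : realFieldType.
Implicit Types (p q : R) (u w d : 'I_2 -> R).

Definition wdot d u w := u 0 * w 0 * d 0 + u 1 * w 1 * d 1.

Definition dyads_diag_mx p q u w d : 'M[R]_2 :=
  \matrix_(i, j) ((p * u i * u j + q * w i * w j) * d j).

Lemma dyads_diag_discr p q u w d (M := dyads_diag_mx p q u w d) :
  (\tr M) ^+ 2 - 4 * \det M
  = (p * wdot d u u - q * wdot d w w) ^+ 2 + 4 * (p * q) * wdot d u w ^+ 2.
Proof. rewrite /M mxtrace22 det_mx22 !mxE /wdot; ring. Qed.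

Lemma dyads_diag_discr_gt0 p q u w d (M := dyads_diag_mx p q u w d) :
  0 < p -> 0 < q -> wdot d u w != 0 -> 4 * \det M < (\tr M) ^+ 2.
Proof.
move=> p_gt0 q_gt0 uw_neq0; rewrite -subr_gt0 dyads_diag_discr.
apply: ltr_wpDl; first exact: sqr_ge0.
apply: mulr_gt0; first by rewrite !mulr_gt0.
by rewrite exprn_even_gt0 //= uw_neq0.
Qed.

Lemma wdot_neq0 u w d :
  0 < d 0 * d 1 -> u 0 != 0 -> w 0 != 0 -> 0 < (u 1 / u 0) * (w 1 / w 0) ->
  wdot d u w != 0.
Proof.
move=> d_gt0 u0_neq0 w0_neq0; set s := _ / _ * _ => s_gt0.
have -> : wdot d u w = u 0 * w 0 * (d 0 + s * d 1).
  by rewrite /wdot /s; field; rewrite u0_neq0 w0_neq0.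
rewrite !mulf_neq0 //; apply/eqP => sum0.
have : d 0 * d 1 = - s * d 1 ^+ 2 by rewrite -[d 0]subr0 -sum0; ring.
nra.
Qed.

End WeightedDyads.

Lemma mono_gt0 (R : realType) (a b x y : R) : 0 < x -> 0 < y -> 0 < mono a b x y.
Proof. by move=> x_gt0 y_gt0; rewrite mulr_gt0 ?powR_gt0. Qed.

Lemma monoD (R : realType) (a b c e x y : R) : 0 < x -> 0 < y ->
  mono (a + c) (b + e) x y = mono a b x y * mono c e x y.
Proof.
move=> x_gt0 y_gt0.
by rewrite /mono !powRD ?(gt_eqF x_gt0) ?(gt_eqF y_gt0) ?implybT //; ring.
Qed.

Lemma powR_subr1 (R : realType) (a x : R) : 0 < x -> x `^ (a - 1) = x `^ a / x.
Proof. by move=> x_gt0; rewrite powRB ?(gt_eqF x_gt0) ?implybT // powRr1 ?ltW. Qed.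

Lemma is_derive_mono_x (R : realType) (a b x y : R) : 0 < x ->
  is_derive x 1 (fun t => mono a b t y) (a * mono a b x y / x).
Proof.
move=> x_gt0.
rewrite (_ : (fun t => _) = y `^ b \*: (@powR R)^~ a); last first.
  by apply/funext => t; rewrite /mono /= mulrC.
rewrite (_ : _ / x = y `^ b *: (a * x `^ (a - 1))).
  exact: is_deriveZ (is_derive1_powR _ x_gt0).
by rewrite powR_subr1 // /mono /GRing.scale /=; ring.
Qed.

Lemma is_derive_mono_y (R : realType) (a b x y : R) : 0 < y ->
  is_derive y 1 (fun t => mono a b x t) (b * mono a b x y / y).
Proof.
move=> y_gt0.
rewrite (_ : _ / y = x `^ a *: (b * y `^ (b - 1))).
  exact: is_deriveZ (is_derive1_powR _ y_gt0).
by rewrite powR_subr1 // /mono /GRing.scale /=; ring.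
Qed.

Lemma derive1_rate_comb (R : realType) (f1 f1' f2 f2' : R -> R)
    (d1 d1' d2 d2' x : R) {k1 k1' k2 k2' c1 c2 : R} :
  is_derive x 1 f1 d1 -> is_derive x 1 f1' d1' ->
  is_derive x 1 f2 d2 -> is_derive x 1 f2' d2' ->
  derive1 (fun t => (k1 * f1 t - k1' * f1' t) * c1 + (k2 * f2 t - k2' * f2' t) * c2) x
  = (k1 * d1 - k1' * d1') * c1 + (k2 * d2 - k2' * d2') * c2.
Proof.
move=> df1 df1' df2 df2'.
rewrite derive1E (_ : (fun t => _) = c1 \*: (k1 \*: f1 - k1' \*: f1')
                                    + c2 \*: (k2 \*: f2 - k2' \*: f2')); last first.
  by apply/funext => t; rewrite /= [_ * c1]mulrC [_ * c2]mulrC.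
by rewrite derive_val /GRing.scale /= [c1 * _]mulrC [c2 * _]mulrC.
Qed.

Section FepsJacobian.
Variables (R : realType) (a1 b1 a1' b1' a2 b2 a2' b2' eps x y : R).
Hypotheses (eps_gt0 : 0 < eps) (x_gt0 : 0 < x) (y_gt0 : 0 < y).
Hypotheses (eq1 : mono (a1' - a1) (b1' - b1) x y = eps ^+ 2)
           (eq2 : mono (a2' - a2) (b2' - b2) x y = eps ^- 2).

Lemma jacobian2_Feps_equilibrium :
  jacobian2 (Feps a1 b1 a1' b1' a2 b2 a2' b2' eps) x y
  = dyads_diag_mx (eps * mono a1 b1 x y) (eps^-1 * mono a2 b2 x y)
      (vec2 (a1' - a1) (b1' - b1)) (vec2 (a2' - a2) (b2' - b2))
      (fun j => - (vec2 x y j)^-1).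
Proof.
have m1' : mono a1' b1' x y = eps ^+ 2 * mono a1 b1 x y.
  by rewrite -[a1'](subrK a1) -[b1'](subrK b1) monoD // eq1.
have m2' : mono a2' b2' x y = eps ^- 2 * mono a2 b2 x y.
  by rewrite -[a2'](subrK a2) -[b2'](subrK b2) monoD // eq2.
apply/matrixP => i j; rewrite !mxE /vec2 /Feps.
case: (j == ord0).
- rewrite (derive1_rate_comb (is_derive_mono_x a1 b1 y x_gt0)
    (is_derive_mono_x a1' b1' y x_gt0) (is_derive_mono_x a2 b2 y x_gt0)
    (is_derive_mono_x a2' b2' y x_gt0)).
  by rewrite m1' m2'; field; rewrite !gt_eqF.
- rewrite (derive1_rate_comb (is_derive_mono_y a1 b1 x y_gt0)
    (is_derive_mono_y a1' b1' x y_gt0) (is_derive_mono_y a2 b2 x y_gt0)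
    (is_derive_mono_y a2' b2' x y_gt0)).
  by rewrite m1' m2'; field; rewrite !gt_eqF.
Qed.

End FepsJacobian.

Theorem proposition4p9 (R : realType) (a1 b1 a1' b1' a2 b2 a2' b2' : R)
  (ha1 : 0 <= a1) (hb1 : 0 <= b1) (ha1' : 0 <= a1') (hb1' : 0 <= b1')
  (ha2 : 0 <= a2) (hb2 : 0 <= b2) (ha2' : 0 <= a2') (hb2' : 0 <= b2')
  (hd1 : a1' - a1 != 0) (hd2 : a2' - a2 != 0)
  (hs1 : -1 < (b1' - b1) / (a1' - a1) < 0)
  (hs2 : (b2' - b2) / (a2' - a2) < -1)
  (Ax Ay : R -> R)
  (hA : forall eps, 0 < eps < 1 ->
     [/\ 0 < Ax eps, 0 < Ay eps,
         mono (a1' - a1) (b1' - b1) (Ax eps) (Ay eps) = eps ^+ 2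
       & mono (a2' - a2) (b2' - b2) (Ax eps) (Ay eps) = eps ^- 2]) :
  exists s : seq R, forall eps, 0 < eps < 1 ->
    equal_eigenvalues
      (jacobian2 (Feps a1 b1 a1' b1' a2 b2 a2' b2' eps) (Ax eps) (Ay eps)) ->
    eps \in s.
Proof.
exists [::] => eps /[dup] eps_bounds /andP[eps_gt0 _] /equal_eigenvalues_discr.
have [x_gt0 y_gt0 eq1 eq2] := hA eps eps_bounds.
rewrite jacobian2_Feps_equilibrium // => /eqP; rewrite gt_eqF //.
apply: dyads_diag_discr_gt0.
- by rewrite mulr_gt0 ?mono_gt0.
- by rewrite mulr_gt0 ?invr_gt0 ?mono_gt0.
apply: wdot_neq0 => //=.
  by rewrite mulrNN mulr_gt0 ?invr_gt0.
move: hs1 hs2 => /andP[_ s1_lt0] s2_lt_N1.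
by rewrite nmulr_rgt0 // (lt_trans s2_lt_N1) ?ltrN10.
Qed.
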